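(* Let $(E,C)$ be a configuration structure that is closed under nonempty intersections. Then: (1) $C$ is closed under directed unions iff $(E,C)$ has finite conflict; (2) $C$ is weakly coherent iff $(E,C)$ is rooted and has binary conflict; (3) $C$ is closed under finitely compatible unions iff it is closed under finitely consistent unions; (4) $C$ is coherent iff $(E,C)$ is rooted and $C$ is closed under pairwise consistent unions.
   Context: $C\subseteq\mathcal{P}(E)$. $X$ is consistent if $X\subseteq z$ for some $z\in C$; finitely (pairwise) consistent if all its finite subsets (subsets of size $\le2$) are consistent. Closed under nonempty intersections: $\emptyset\ne A\subseteq C\Rightarrow\bigcap A\in C$. Rooted: $\emptyset\in C$. Finite conflict: every $X\subseteq E$ such that each finite $Y\subseteq X$ satisfies $Y\subseteq z\subseteq X$ for some $z\in C$ belongs to $C$; binary conflict: same with $|Y|\le 2$. Closed under directed unions: for every nonempty $A\subseteq C$ such that for all $x,y\in A$ there is $z\in A$ with $x\cup y\subseteq z$, $\bigcup A\in C$. Weakly coherent: for every $A\subseteq C$ such that for all $x,y\in A$ there is $z\in C$ with $x\cup y\subseteq z\subseteq\bigcup A$, $\bigcup A\in C$. Closed under finitely compatible unions: $A\subseteq C$ and $\bigcup F$ consistent for every finite $F\subseteq A$ imply $\bigcup A\in C$. Coherent: $A\subseteq C$ and $x\cup y$ consistent for all $x,y\in A$ imply $\bigcup A\in C$. Closed under finitely (pairwise) consistent unions: $A\subseteq C$ with $\bigcup A$ finitely (pairwise) consistent implies $\bigcup A\in C$. *)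

From Stdlib Require Import List.

Set Implicit Arguments.

Definition pset (T : Type) := T -> Prop.

Definition subset {T : Type} (X Y : pset T) : Prop := forall e, X e -> Y e.

Definition union2 {T : Type} (X Y : pset T) : pset T := fun e => X e \/ Y e.

Definition bigcup {T : Type} (A : pset (pset T)) : pset T :=
  fun e => exists x, A x /\ x e.

Definition bigcap {T : Type} (A : pset (pset T)) : pset T :=
  fun e => forall x, A x -> x e.

Definition emptyset {T : Type} : pset T := fun _ => False.

Definition finite {T : Type} (Y : pset T) : Prop :=
  exists l : list T, forall e, Y e -> In e l.

Definition atmost2 {T : Type} (Y : pset T) : Prop :=
  exists l : list T, length l <= 2 /\ forall e, Y e -> In e l.

Section ConfStruct.
Variable E : Type.
Variable C : pset (pset E).

Definition consistent (X : pset E) : Prop := exists z, C z /\ subset X z.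

Definition finitely_consistent (X : pset E) : Prop :=
  forall Y, subset Y X -> finite Y -> consistent Y.

Definition pairwise_consistent (X : pset E) : Prop :=
  forall Y, subset Y X -> atmost2 Y -> consistent Y.

Definition closed_nonempty_intersections : Prop :=
  forall A : pset (pset E), subset A C -> (exists x, A x) -> C (bigcap A).

Definition rooted : Prop := C emptyset.

Definition finite_conflict : Prop :=
  forall X : pset E,
    (forall Y, subset Y X -> finite Y -> exists z, C z /\ subset Y z /\ subset z X) ->
    C X.

Definition binary_conflict : Prop :=
  forall X : pset E,
    (forall Y, subset Y X -> atmost2 Y -> exists z, C z /\ subset Y z /\ subset z X) ->
    C X.

Definition closed_directed_unions : Prop :=
  forall A : pset (pset E), subset A C -> (exists x, A x) ->
    (forall x y, A x -> A y -> exists z, A z /\ subset (union2 x y) z) ->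
    C (bigcup A).

Definition weakly_coherent : Prop :=
  forall A : pset (pset E), subset A C ->
    (forall x y, A x -> A y ->
       exists z, C z /\ subset (union2 x y) z /\ subset z (bigcup A)) ->
    C (bigcup A).

Definition closed_finitely_compatible_unions : Prop :=
  forall A : pset (pset E), subset A C ->
    (forall F : pset (pset E), subset F A -> finite F -> consistent (bigcup F)) ->
    C (bigcup A).

Definition coherent : Prop :=
  forall A : pset (pset E), subset A C ->
    (forall x y, A x -> A y -> consistent (union2 x y)) ->
    C (bigcup A).

Definition closed_finitely_consistent_unions : Prop :=
  forall A : pset (pset E), subset A C ->
    finitely_consistent (bigcup A) -> C (bigcup A).

Definition closed_pairwise_consistent_unions : Prop :=
  forall A : pset (pset E), subset A C ->
    pairwise_consistent (bigcup A) -> C (bigcup A).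

End ConfStruct.

(* Closure under nonempty intersections gives every consistent set Y a least
   configuration [hull Y] containing it, and [hull] is monotone.  The local
   hypotheses (finite or binary conflict, finite or pairwise consistency) make the
   hulls of the finite subsets of X a directed family of configurations, and the
   hulls of the points of X a pairwise compatible one, both with union X; the
   corresponding union-closure property then puts X in C.  Conversely, a finite
   subset of a union is covered by finitely many members, and the empty union is
   why (weak) coherence forces rootedness. *)
From Stdlib Require Import List Lia Classical FunctionalExtensionality PropExtensionality.

Lemma pset_ext {T : Type} (X Y : pset T) : (forall e, X e <-> Y e) -> X = Y.
Proof. intros H; extensionality e; apply propositional_extensionality; auto. Qed.

Definition single {T : Type} (a : T) : pset T := fun e => e = a.

Lemma finite_single {T : Type} (a : T) : finite (single a).
Proof. exists (a :: nil); intros e ->; left; reflexivity. Qed.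

Lemma finite_emptyset {T : Type} : finite (@emptyset T).
Proof. exists nil; intros e []. Qed.

Lemma finite_union2 {T : Type} (Y Y' : pset T) :
  finite Y -> finite Y' -> finite (union2 Y Y').
Proof.
  intros [l Hl] [l' Hl']; exists (l ++ l').
  intros e [He | He]; apply in_or_app; auto.
Qed.

Lemma bigcup_empty {T : Type} : bigcup (fun _ : pset T => False) = emptyset.
Proof. apply pset_ext; intros e; split; [intros [x [[] _]] | intros []]. Qed.

Definition directed {T : Type} (D : pset (pset T)) : Prop :=
  forall x y, D x -> D y -> exists z, D z /\ subset (union2 x y) z.

Lemma directed_bound {T : Type} (D F : pset (pset T)) :
  directed D -> (exists x, D x) -> subset F D -> finite F ->
  exists z, D z /\ subset (bigcup F) z.
Proof.
  intros HD [x0 Dx0] sFD [l Hl].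
  assert (Hbound : forall l' : list (pset T),
                     exists z, D z /\ forall x, In x l' -> F x -> subset x z).
  { intros l'; induction l' as [|a l' [z [Dz Hz]]].
    - exists x0; split; [exact Dx0 | intros x []].
    - destruct (classic (F a)) as [Fa | nFa].
      + destruct (HD a z (sFD a Fa) Dz) as [w [Dw Hw]].
        exists w; split; [exact Dw |].
        intros x [<- | Hx] Fx e xe; apply Hw; [left | right; apply (Hz x)]; auto.
      + exists z; split; [exact Dz |].
        intros x [<- | Hx] Fx; [contradiction | auto]. }
  destruct (Hbound l) as [z [Dz Hz]].
  exists z; split; [exact Dz |].
  intros e [x [Fx xe]]; exact (Hz x (Hl x Fx) Fx e xe).
Qed.

Lemma finite_cover {T : Type} (A : pset (pset T)) (Y : pset T) :
  finite Y -> subset Y (bigcup A) ->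
  exists F, subset F A /\ finite F /\ subset Y (bigcup F).
Proof.
  intros [l Hl] sYA.
  assert (Hcover : forall l' : list T, exists F, subset F A /\ finite F /\
                     forall e, In e l' -> Y e -> bigcup F e).
  { intros l'; induction l' as [|a l' [F [sFA [fF HF]]]].
    - exists emptyset; repeat split; [intros x [] | apply finite_emptyset | intros e []].
    - destruct (classic (Y a)) as [Ya | nYa].
      + destruct (sYA a Ya) as [x [Ax xa]].
        exists (union2 F (single x)); repeat split.
        * intros y [Fy | ->]; auto.
        * apply finite_union2; [exact fF | apply finite_single].
        * intros e [<- | He] Ye.
          -- exists x; split; [right; reflexivity | exact xa].
          -- destruct (HF e He Ye) as [y [Fy ye]]; exists y; split; [left |]; auto.
      + exists F; repeat split; auto.
        intros e [<- | He] Ye; [contradiction | auto]. }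
  destruct (Hcover l) as [F [sFA [fF HF]]].
  exists F; repeat split; auto.
  intros e Ye; exact (HF e (Hl e Ye) Ye).
Qed.

Lemma atmost2_cover {T : Type} (A : pset (pset T)) (Y : pset T) :
  atmost2 Y -> subset Y (bigcup A) ->
  subset Y emptyset \/ exists x y, A x /\ A y /\ subset Y (union2 x y).
Proof.
  intros [l [Hlen Hl]] sYA.
  destruct (classic (exists e, Y e)) as [[e0 Ye0] | nY];
    [right | left; intros e Ye; apply nY; exists e; exact Ye].
  destruct (sYA e0 Ye0) as [x0 [Ax0 _]].
  assert (Hpick : forall a, exists x, A x /\ (Y a -> x a)).
  { intros a; destruct (classic (Y a)) as [Ya | nYa].
    - destruct (sYA a Ya) as [x [Ax xa]]; exists x; auto.
    - exists x0; split; [exact Ax0 | contradiction]. }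
  destruct l as [|a [|b [|c l]]]; simpl in Hlen.
  - destruct (Hl e0 Ye0).
  - destruct (Hpick a) as [x [Ax Hx]].
    exists x, x; repeat split; auto.
    intros e Ye; destruct (Hl e Ye) as [<- | []]; left; auto.
  - destruct (Hpick a) as [x [Ax Hx]]; destruct (Hpick b) as [y [Ay Hy]].
    exists x, y; repeat split; auto.
    intros e Ye; destruct (Hl e Ye) as [<- | [<- | []]]; [left | right]; auto.
  - lia.
Qed.

Section Hull.
Variable E : Type.
Variable C : pset (pset E).

Definition hull (Y : pset E) : pset E := bigcap (fun z => C z /\ subset Y z).

Definition hulls (F : pset (pset E)) : pset (pset E) :=
  fun x => exists Y, F Y /\ x = hull Y.

Definition finite_subsets (X : pset E) : pset (pset E) :=
  fun Y => subset Y X /\ finite Y.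

Definition singletons (X : pset E) : pset (pset E) :=
  fun Y => exists a, X a /\ Y = single a.

Lemma sub_hull (Y : pset E) : subset Y (hull Y).
Proof. intros e Ye z [_ sYz]; exact (sYz e Ye). Qed.

Lemma hull_min (Y z : pset E) : C z -> subset Y z -> subset (hull Y) z.
Proof. intros Cz sYz e He; exact (He z (conj Cz sYz)). Qed.

Lemma hull_mono (Y Y' : pset E) : subset Y Y' -> subset (hull Y) (hull Y').
Proof. intros sYY' e He z [Cz sY'z]; apply He; split; [exact Cz | intros a Ya; auto]. Qed.

Lemma hull_union2_min (Y Y' z : pset E) :
  C z -> subset Y z -> subset Y' z -> subset (union2 (hull Y) (hull Y')) z.
Proof. intros Cz sYz sY'z e [He | He]; [exact (hull_min Y z Cz sYz e He) | exact (hull_min Y' z Cz sY'z e He)]. Qed.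

Lemma sub_bigcup_hulls (F : pset (pset E)) (X : pset E) :
  (forall a, X a -> F (single a)) -> subset X (bigcup (hulls F)).
Proof.
  intros HF a Xa; exists (hull (single a)); split.
  - exists (single a); split; [exact (HF a Xa) | reflexivity].
  - apply sub_hull; reflexivity.
Qed.

Lemma bigcup_hulls_sub (F : pset (pset E)) (X : pset E) :
  (forall Y, F Y -> exists z, C z /\ subset Y z /\ subset z X) ->
  subset (bigcup (hulls F)) X.
Proof.
  intros HF e [x [[Y [FY ->]] He]].
  destruct (HF Y FY) as [z [Cz [sYz szX]]].
  exact (szX e (hull_min Y z Cz sYz e He)).
Qed.

Lemma hulls_finite_subsets_directed (X : pset E) : directed (hulls (finite_subsets X)).
Proof.
  intros x y [Y [[sYX fY] ->]] [Y' [[sY'X fY'] ->]].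
  exists (hull (union2 Y Y')); split.
  - exists (union2 Y Y'); repeat split.
    + intros e [He | He]; auto.
    + apply finite_union2; assumption.
  - intros e [He | He]; revert e He; apply hull_mono; intros e He; [left | right]; exact He.
Qed.

Lemma hulls_finite_subsets_nonempty (X : pset E) : exists x, hulls (finite_subsets X) x.
Proof.
  exists (hull emptyset), emptyset; repeat split.
  - intros e [].
  - apply finite_emptyset.
Qed.

Lemma sub_bigcup_hulls_finite_subsets (X : pset E) :
  subset X (bigcup (hulls (finite_subsets X))).
Proof.
  apply sub_bigcup_hulls; intros a Xa; split; [intros e -> | apply finite_single]; exact Xa.
Qed.

Lemma sub_bigcup_hulls_singletons (X : pset E) : subset X (bigcup (hulls (singletons X))).
Proof. apply sub_bigcup_hulls; intros a Xa; exists a; auto. Qed.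

Hypothesis HI : closed_nonempty_intersections C.

Lemma hull_in (Y : pset E) : consistent C Y -> C (hull Y).
Proof. intros [z [Cz sYz]]; apply HI; [intros x [Cx _]; exact Cx | exists z; auto]. Qed.

Lemma hulls_in (F : pset (pset E)) :
  (forall Y, F Y -> consistent C Y) -> subset (hulls F) C.
Proof. intros HF x [Y [FY ->]]; apply hull_in, HF, FY. Qed.

End Hull.

Arguments hull {E} C Y.
Arguments hulls {E} C F.
Arguments finite_subsets {E} X.
Arguments singletons {E} X.

Section Theorem14.
Variable E : Type.
Variable C : pset (pset E).

Lemma finite_conflict_directed_unions : finite_conflict C -> closed_directed_unions C.
Proof.
  intros HF A sAC nA HD; apply HF; intros Y sYA fY.
  destruct (finite_cover A Y fY sYA) as [F [sFA [fF sYF]]].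
  destruct (directed_bound A F HD nA sFA fF) as [z [Az sFz]].
  exists z; repeat split.
  - exact (sAC z Az).
  - intros e Ye; exact (sFz e (sYF e Ye)).
  - intros e ze; exists z; auto.
Qed.

Lemma weakly_coherent_rooted : weakly_coherent C -> rooted C.
Proof.
  intros HW; unfold rooted; rewrite <- bigcup_empty.
  apply HW; [intros x [] | intros x y []].
Qed.

Lemma coherent_rooted : coherent C -> rooted C.
Proof.
  intros HC; unfold rooted; rewrite <- bigcup_empty.
  apply HC; [intros x [] | intros x y []].
Qed.

Lemma rooted_binary_conflict_weakly_coherent :
  rooted C -> binary_conflict C -> weakly_coherent C.
Proof.
  intros HR HB A sAC HW; apply HB; intros Y sYA HY.
  destruct (atmost2_cover A Y HY sYA) as [sY0 | [x [y [Ax [Ay sYxy]]]]].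
  - exists emptyset; repeat split; [exact HR | exact sY0 | intros e []].
  - destruct (HW x y Ax Ay) as [z [Cz [sxyz szA]]].
    exists z; repeat split; auto.
    intros e Ye; auto.
Qed.

Lemma rooted_pairwise_consistent_coherent :
  rooted C -> closed_pairwise_consistent_unions C -> coherent C.
Proof.
  intros HR HP A sAC HC; apply HP; [exact sAC |]; intros Y sYA HY.
  destruct (atmost2_cover A Y HY sYA) as [sY0 | [x [y [Ax [Ay sYxy]]]]].
  - exists emptyset; split; [exact HR | exact sY0].
  - destruct (HC x y Ax Ay) as [z [Cz sxyz]].
    exists z; split; [exact Cz | intros e Ye; auto].
Qed.

Lemma finitely_consistent_compatible_unions :
  closed_finitely_consistent_unions C -> closed_finitely_compatible_unions C.
Proof.
  intros HU A sAC HA; apply HU; [exact sAC |]; intros Y sYA fY.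
  destruct (finite_cover A Y fY sYA) as [F [sFA [fF sYF]]].
  destruct (HA F sFA fF) as [z [Cz sFz]].
  exists z; split; [exact Cz | intros e Ye; auto].
Qed.

Hypothesis HI : closed_nonempty_intersections C.

Lemma directed_unions_finite_conflict : closed_directed_unions C -> finite_conflict C.
Proof.
  intros HD X HX.
  set (D := hulls C (finite_subsets X)).
  assert (HDX : bigcup D = X).
  { apply pset_ext; intros e; split.
    - apply bigcup_hulls_sub; intros Y [sYX fY]; exact (HX Y sYX fY).
    - apply sub_bigcup_hulls_finite_subsets. }
  rewrite <- HDX; apply HD.
  - apply hulls_in; [exact HI |]; intros Y [sYX fY].
    destruct (HX Y sYX fY) as [z [Cz [sYz _]]]; exists z; auto.
  - apply hulls_finite_subsets_nonempty.
  - apply hulls_finite_subsets_directed.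
Qed.

Lemma weakly_coherent_binary_conflict : weakly_coherent C -> binary_conflict C.
Proof.
  intros HW X HX.
  assert (Hpair : forall a b, X a -> X b ->
                    exists w, C w /\ w a /\ w b /\ subset w X).
  { intros a b Xa Xb.
    destruct (HX (fun e => e = a \/ e = b)) as [w [Cw [sabw swX]]].
    - intros e [-> | ->]; assumption.
    - exists (a :: b :: nil); split; [auto | intros e [-> | ->]; simpl; auto].
    - exists w; repeat split; [exact Cw | apply sabw; left | apply sabw; right | exact swX];
        reflexivity. }
  set (D := hulls C (singletons X)).
  assert (HDX : bigcup D = X).
  { apply pset_ext; intros e; split.
    - apply bigcup_hulls_sub; intros Y [a [Xa ->]].
      destruct (Hpair a a Xa Xa) as [w [Cw [wa [_ swX]]]].
      exists w; repeat split; [exact Cw | intros e' -> | ]; assumption.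
    - apply sub_bigcup_hulls_singletons. }
  rewrite <- HDX; apply HW.
  - apply hulls_in; [exact HI |]; intros Y [a [Xa ->]].
    destruct (Hpair a a Xa Xa) as [w [Cw [wa _]]].
    exists w; split; [exact Cw | intros e ->; exact wa].
  - intros x y [Y [[a [Xa ->]] ->]] [Y' [[b [Xb ->]] ->]].
    destruct (Hpair a b Xa Xb) as [w [Cw [wa [wb swX]]]].
    exists w; repeat split; [exact Cw | | rewrite HDX; exact swX].
    apply hull_union2_min; [exact Cw | intros e -> | intros e ->]; assumption.
Qed.

Lemma coherent_pairwise_consistent_unions :
  coherent C -> closed_pairwise_consistent_unions C.
Proof.
  intros HC A sAC HP.
  set (X := bigcup A).
  assert (Hpair : forall a b, X a -> X b -> exists w, C w /\ w a /\ w b).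
  { intros a b Xa Xb.
    destruct (HP (fun e => e = a \/ e = b)) as [w [Cw sabw]].
    - intros e [-> | ->]; assumption.
    - exists (a :: b :: nil); split; [auto | intros e [-> | ->]; simpl; auto].
    - exists w; repeat split; [exact Cw | apply sabw; left | apply sabw; right];
        reflexivity. }
  set (D := hulls C (singletons X)).
  (* a point of X lies in a member of A, which then contains the hull of the point *)
  assert (HDX : bigcup D = X).
  { apply pset_ext; intros e; split.
    - apply bigcup_hulls_sub; intros Y [a [[x [Ax xa]] ->]].
      exists x; repeat split; [exact (sAC x Ax) | intros e' ->; exact xa |].
      intros e' xe'; exists x; auto.
    - apply sub_bigcup_hulls_singletons. }
  rewrite <- HDX; apply HC.
  - apply hulls_in; [exact HI |]; intros Y [a [Xa ->]].
    destruct (Hpair a a Xa Xa) as [w [Cw [wa _]]].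
    exists w; split; [exact Cw | intros e ->; exact wa].
  - intros x y [Y [[a [Xa ->]] ->]] [Y' [[b [Xb ->]] ->]].
    destruct (Hpair a b Xa Xb) as [w [Cw [wa wb]]].
    exists w; split; [exact Cw |].
    apply hull_union2_min; [exact Cw | intros e -> | intros e ->]; assumption.
Qed.

Lemma finitely_consistent_consistent (X : pset E) :
  closed_finitely_compatible_unions C -> finitely_consistent C X -> consistent C X.
Proof.
  intros HU HX.
  set (D := hulls C (finite_subsets X)).
  assert (sDC : subset D C).
  { apply hulls_in; [exact HI |]; intros Y [sYX fY]; exact (HX Y sYX fY). }
  exists (bigcup D); split; [| apply sub_bigcup_hulls_finite_subsets].
  apply HU; [exact sDC |]; intros F sFD fF.
  destruct (directed_bound D F (hulls_finite_subsets_directed E C X)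
              (hulls_finite_subsets_nonempty E C X) sFD fF) as [z [Dz sFz]].
  exists z; split; [exact (sDC z Dz) | exact sFz].
Qed.

Lemma finitely_compatible_consistent_unions :
  closed_finitely_compatible_unions C -> closed_finitely_consistent_unions C.
Proof.
  intros HU A sAC HA.
  destruct (finitely_consistent_consistent (bigcup A) HU HA) as [w [Cw sAw]].
  apply HU; [exact sAC |]; intros F sFA _.
  exists w; split; [exact Cw |].
  intros e [x [Fx xe]]; apply sAw; exists x; auto.
Qed.

End Theorem14.

Theorem mainTheorem14 (E : Type) (C : pset (pset E)) :
  closed_nonempty_intersections C ->
  (closed_directed_unions C <-> finite_conflict C) /\
  (weakly_coherent C <-> rooted C /\ binary_conflict C) /\
  (closed_finitely_compatible_unions C <-> closed_finitely_consistent_unions C) /\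
  (coherent C <-> rooted C /\ closed_pairwise_consistent_unions C).
Proof.
  intros HI; repeat split.
  - apply directed_unions_finite_conflict; assumption.
  - apply finite_conflict_directed_unions.
  - apply weakly_coherent_rooted; assumption.
  - apply weakly_coherent_binary_conflict; assumption.
  - intros [HR HB]; apply rooted_binary_conflict_weakly_coherent; assumption.
  - apply finitely_compatible_consistent_unions; assumption.
  - apply finitely_consistent_compatible_unions.
  - apply coherent_rooted; assumption.
  - apply coherent_pairwise_consistent_unions; assumption.
  - intros [HR HP]; apply rooted_pairwise_consistent_coherent; assumption.
Qed.
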